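(* Let $H$ be a finite-dimensional Hopf algebra over a field $k$, $R\subseteq H$ a Hopf subalgebra and $Q=H/R^+H$. If $Q$ is conditionally faithful, then $L_Q=\ell_Q$.
   Context: $R^+=\ker\varepsilon\cap R$; $Q^{\otimes n}$ is the $n$-fold tensor power of $Q$ in mod-$H$ (tensor over $k$, diagonal action $(m\otimes n)h=mh_{(1)}\otimes nh_{(2)}$). $\mathrm{Ann}\,M=\{h\in H:Mh=0\}$, and $\ell_Q$ is the least $n\ge1$ with $\mathrm{Ann}\,Q^{\otimes n}=\mathrm{Ann}\,Q^{\otimes m}$ for all $m\ge n$ (the stabilization point of the descending chain of annihilators). The trace ideal of a module $M_H$ is $\tau(M)=\{\sum_if_i(m_i):f_i\in\mathrm{Hom}(M_H,H_H),m_i\in M\}$; the chain $\tau(Q)\subseteq\tau(Q^{\otimes 2})\subseteq\cdots$ is ascending and $L_Q$ is the least $n\ge1$ with $\tau(Q^{\otimes n})=\tau(Q^{\otimes m})$ for all $m\ge n$. A module is conditionally faithful if one of its tensor powers is faithful. *)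

From HB Require Import structures.
From mathcomp Require Import all_boot all_algebra mxtens.
Set Implicit Arguments.
Unset Strict Implicit.
Unset Printing Implicit Defensive.
Import GRing.Theory.
Local Open Scope ring_scope.

Section Hopf.
Variables (F : fieldType) (n : nat).

(** The Hopf algebra H is the space 'rV[F]_n with basis e_i = bvec i,
    given by structure constants. *)
Definition bvec (i : 'I_n) : 'rV[F]_n := delta_mx 0 i.

Record hopf_data := HopfData {
  hmu : 'I_n -> 'I_n -> 'rV[F]_n;
  hone : 'rV[F]_n;
  hdelta : 'I_n -> 'M[F]_n;        (* Delta(e_i) = sum_{a,b} hdelta i a b  e_a (x) e_b *)
  heps : 'I_n -> F;
  hS : 'M[F]_n                     (* antipode: S(h) = h *m hS *)
}.

Variable H : hopf_data.

Definition mulH (u v : 'rV[F]_n) : 'rV[F]_n :=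
  \sum_(i < n) \sum_(j < n) (u 0 i * v 0 j) *: hmu H i j.
(* Delta(u) as a coefficient matrix: H (x) H = 'M_n, u (x) v <-> u^T *m v *)
Definition DeltaH (u : 'rV[F]_n) : 'M[F]_n := \sum_(i < n) u 0 i *: hdelta H i.
Definition epsH (u : 'rV[F]_n) : F := \sum_(i < n) u 0 i * heps H i.
Definition SH (u : 'rV[F]_n) : 'rV[F]_n := u *m hS H.

Definition is_hopf : Prop :=
      (forall u v w, mulH (mulH u v) w = mulH u (mulH v w)) /\
      (forall u, mulH (hone H) u = u /\ mulH u (hone H) = u) /\
      (* coassociativity: (Delta (x) id) Delta = (id (x) Delta) Delta *)
      (forall i a b c, \sum_(j < n) hdelta H i j c * hdelta H j a b
                     = \sum_(j < n) hdelta H i a j * hdelta H j b c) /\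
      ((forall i b, \sum_(a < n) hdelta H i a b * heps H a = (i == b)%:R)
      /\ (forall i a, \sum_(b < n) hdelta H i a b * heps H b = (i == a)%:R)) /\
      (* Delta and epsilon are algebra maps *)
      ((forall u v x y, DeltaH (mulH u v) x y =
          \sum_(a < n) \sum_(b < n) \sum_(c < n) \sum_(d < n)
             DeltaH u a b * DeltaH v c d * (hmu H a c) 0 x * (hmu H b d) 0 y)
      /\ DeltaH (hone H) = (hone H)^T *m hone H) /\
      ((forall u v, epsH (mulH u v) = epsH u * epsH v) /\ epsH (hone H) = 1) /\
      (* antipode: S(h_(1)) h_(2) = eps(h) 1 = h_(1) S(h_(2)) *)
      (forall u,
        \sum_(a < n) \sum_(b < n) DeltaH u a b *: mulH (SH (bvec a)) (bvec b)
          = epsH u *: hone H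
        /\ \sum_(a < n) \sum_(b < n) DeltaH u a b *: mulH (bvec a) (SH (bvec b))
          = epsH u *: hone H).

(** Subspaces of H are row spaces of square matrices (mxalgebra). *)
Definition is_hopf_subalg (R : 'M[F]_n) : Prop :=
  [/\ (hone H <= R)%MS,
      (forall u v, (u <= R)%MS -> (v <= R)%MS -> (mulH u v <= R)%MS),
      (* Delta(R) is contained in R (x) R = { R^T *m Y *m R } *)
      (forall u, (u <= R)%MS -> exists Y : 'M[F]_n, DeltaH u = R^T *m Y *m R) &
      (forall u, (u <= R)%MS -> (SH u <= R)%MS)].

(* matrix of right multiplication by h : v *m regmx h = v h *)
Definition regmx (h : 'rV[F]_n) : 'M[F]_n := \matrix_(i < n) mulH (bvec i) h.

Definition epscol : 'cV[F]_n := \col_(i < n) heps H i.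

Definition Rplus (R : 'M[F]_n) : 'M[F]_n := (R :&: kermx epscol)%MS.

Definition RplusH (R : 'M[F]_n) : 'M[F]_n :=
  (\sum_(j < n) (Rplus R *m regmx (bvec j)))%MS.

(** Finite-dimensional right H-modules: M = 'rV[F]_d, with
    m . h = m *m act M h. *)
Record hmod := HMod { mdim : nat; mrho : 'I_n -> 'M[F]_mdim }.

Definition act (M : hmod) (h : 'rV[F]_n) : 'M[F]_(mdim M) :=
  \sum_(i < n) h 0 i *: mrho M i.

(* quotient module H / I for a right ideal I (as factmod_mx in mxrepresentation) *)
Definition in_fact (I : 'M[F]_n) m (W : 'M[F]_(m, n)) :=
  W *m col_base (cokermx I).
Definition val_fact (I : 'M[F]_n) m (W : 'M[F]_(m, \rank (cokermx I))) :=
  W *m (row_base (cokermx I) *m row_ebase I).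
Definition factmod (I : 'M[F]_n) : hmod :=
  @HMod (\rank (cokermx I))
        (fun i => @in_fact I _ (@val_fact I _ 1%:M *m regmx (bvec i))).

Definition Qmod (R : 'M[F]_n) : hmod := factmod (RplusH R).

Definition trivmod : hmod := @HMod 1 (fun i => (heps H i)%:M).

Definition tensmod (M N : hmod) : hmod :=
  @HMod (mdim M * mdim N)
        (fun i => \sum_(a < n) \sum_(b < n) hdelta H i a b *: (mrho M a *t mrho N b)).

Fixpoint tpow (M : hmod) (m : nat) : hmod :=
  match m with
  | 0 => trivmod
  | m'.+1 => if m' is 0 then M else tensmod (tpow M m') M
  end.

Definition in_ann (M : hmod) (h : 'rV[F]_n) : bool := act M h == 0.

Definition faithful (M : hmod) : Prop := forall h, in_ann M h -> h = 0.

Definition cond_faithful (M : hmod) : Prop :=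
  exists m, (0 < m)%N /\ faithful (tpow M m).

(* module maps M_H -> H_H, as matrices: f(m) = m *m A *)
Definition is_hom (M : hmod) (A : 'M[F]_(mdim M, n)) : Prop :=
  forall h, act M h *m A = A *m regmx h.

Definition in_trace (M : hmod) (h : 'rV[F]_n) : Prop :=
  exists k (fs : 'I_k -> 'M[F]_(mdim M, n)) (ms : 'I_k -> 'rV[F]_(mdim M)),
    (forall i, @is_hom M (fs i)) /\ h = \sum_(i < k) ms i *m fs i.

Definition ann_stable (M : hmod) (l : nat) : Prop :=
  forall m, (l <= m)%N -> forall h, in_ann (tpow M l) h = in_ann (tpow M m) h.

Definition trace_stable (M : hmod) (l : nat) : Prop :=
  forall m, (l <= m)%N -> forall h, in_trace (tpow M l) h <-> in_trace (tpow M m) h.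

End Hopf.

Definition least_pos (P : nat -> Prop) (l : nat) : Prop :=
  [/\ (0 < l)%N, P l & forall l', (0 < l')%N -> P l' -> (l <= l')%N].

Definition is_ell F n (H : hopf_data F n) (M : hmod F n) l := least_pos (ann_stable H M) l.
Definition is_L F n (H : hopf_data F n) (M : hmod F n) l := least_pos (trace_stable H M) l.

(* The class of 1 in Q = H/R^+H is sent to 1 by the counit, because R^+H lies
   in ker epsilon.  So Q maps onto the trivial module, Ann (M (x) Q) is
   contained in Ann M, and Q^(x m) is faithful exactly for m >= l, the least
   faithful exponent: the annihilators stabilise, at 0, exactly from l on.
   On the other hand a faithful module M over a finite-dimensional Hopf algebra
   is a generator.  A linear left inverse of H -> End(M) yields module maps from
   M to the coinduced module Hom(H, H), whose untwisting isomorphism with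
   Hom(H, H_H) makes H_H a direct summand of it; together they put 1 in the
   trace ideal of M.  Since conversely 1 in tau(M) forces M to be faithful, the
   trace ideals stabilise, at H, exactly from l on as well. *)

From HB Require Import structures.
From mathcomp Require Import all_boot all_algebra mxtens mxrepresentation.
Set Implicit Arguments.
Unset Strict Implicit.
Unset Printing Implicit Defensive.
Import GRing.Theory.
Local Open Scope ring_scope.

Section KroneckerSums.
Variables (R : pzRingType) (V : lmodType R) (m : nat).

Lemma sum_kronZ (i : 'I_m) (f : 'I_m -> V) : \sum_k (i == k)%:R *: f k = f i.
Proof.
rewrite (bigD1 i) //= eqxx scale1r big1 ?addr0 // => k.
by rewrite eq_sym => /negbTE ->; rewrite scale0r.
Qed.

Lemma sum_kronZr (i : 'I_m) (f : 'I_m -> V) : \sum_k (k == i)%:R *: f k = f i.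
Proof. by rewrite -[RHS](sum_kronZ i); apply: eq_bigr => k _; rewrite eq_sym. Qed.

End KroneckerSums.

Section ExchangeSums.
Variables (V : nmodType) (m : nat).

Lemma exchange_big4 (f : 'I_m -> 'I_m -> 'I_m -> 'I_m -> V) :
  \sum_a \sum_b \sum_c \sum_d f a b c d = \sum_c \sum_d \sum_a \sum_b f a b c d.
Proof.
under eq_bigr => a _ do under eq_bigr => b _ do rewrite pair_bigA.
rewrite pair_bigA.
under [RHS]eq_bigr => a _ do under eq_bigr => b _ do rewrite pair_bigA.
by rewrite [RHS]pair_bigA exchange_big.
Qed.

Lemma exchange_big6 (f : 'I_m -> 'I_m -> 'I_m -> 'I_m -> 'I_m -> 'I_m -> V) :
  \sum_x \sum_y \sum_a \sum_b \sum_c \sum_d f x y a b c d =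
  \sum_a \sum_b \sum_c \sum_d \sum_x \sum_y f x y a b c d.
Proof.
rewrite exchange_big4; apply: eq_bigr => a _; apply: eq_bigr => b _.
exact: exchange_big4.
Qed.

End ExchangeSums.

Section TensorLinear.
Variables (R : comPzRingType) (m1 n1 m2 n2 : nat).

Lemma tensmxZl c (A : 'M[R]_(m1, n1)) (B : 'M[R]_(m2, n2)) :
  (c *: A) *t B = c *: (A *t B).
Proof. by apply/matrixP => i j; rewrite !mxE mulrA. Qed.

Lemma tensmxZr c (A : 'M[R]_(m1, n1)) (B : 'M[R]_(m2, n2)) :
  A *t (c *: B) = c *: (A *t B).
Proof. by apply/matrixP => i j; rewrite !mxE mulrCA. Qed.

Lemma tensmx_suml I r (P : pred I) (A : I -> 'M[R]_(m1, n1)) (B : 'M[R]_(m2, n2)) :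
  (\sum_(i <- r | P i) A i) *t B = \sum_(i <- r | P i) (A i *t B).
Proof.
apply/matrixP => x y; rewrite mxE !summxE mulr_suml.
by apply: eq_bigr => i _; rewrite mxE.
Qed.

Lemma tensmx_sumr I r (P : pred I) (A : 'M[R]_(m1, n1)) (B : I -> 'M[R]_(m2, n2)) :
  A *t (\sum_(i <- r | P i) B i) = \sum_(i <- r | P i) (A *t B i).
Proof.
apply/matrixP => x y; rewrite mxE !summxE mulr_sumr.
by apply: eq_bigr => i _; rewrite mxE.
Qed.

End TensorLinear.

Section LinearInverse.
Variables (F : fieldType) (p q : nat) (f : {linear 'M[F]_(p, q) -> 'M[F]_(p, q)}).
Hypothesis f_inj : injective f.

Lemma lin_mx_unit : lin_mx f \in unitmx.
Proof.
rewrite -row_free_unit -kermx_eq0; apply/eqP/row_matrixP => r; rewrite row0.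
have : row r (kermx (lin_mx f)) *m lin_mx f = 0 by rewrite -row_mul mulmx_ker row0.
rewrite mul_rV_lin -(linear0 (@mxvec F p q)) -(linear0 f).
by move/(can_inj mxvecK)/f_inj/(congr1 mxvec); rewrite vec_mxK linear0.
Qed.

Definition lininv B := vec_mx (mxvec B *m invmx (lin_mx f)).

Lemma lininvK : cancel lininv f.
Proof.
move=> B; apply: (can_inj mxvecK); rewrite -mul_vec_lin /lininv vec_mxK.
by rewrite -mulmxA mulVmx ?mulmx1 // lin_mx_unit.
Qed.

Lemma lin_lininvK : cancel f lininv.
Proof. by move=> A; apply: f_inj; rewrite lininvK. Qed.

Lemma lininv_linear : linear lininv.
Proof. by move=> a B C; apply: f_inj; rewrite linearP !lininvK. Qed.

End LinearInverse.

Section HopfCoordinates.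
Variables (F : fieldType) (n : nat) (H : hopf_data F n).
Local Notation e := (@bvec F n).
Local Notation mu := (mulH H).

Definition lregmx (g : 'rV[F]_n) : 'M[F]_n := \matrix_(i < n) mu g (e i).

Lemma bvecE i j : e i 0 j = (i == j)%:R.
Proof. by rewrite /bvec mxE eq_sym. Qed.

Lemma mulH_bvecl i v : mu (e i) v = \sum_j v 0 j *: hmu H i j.
Proof.
rewrite /mulH.
under eq_bigr => k _ do under eq_bigr => l _ do rewrite !bvecE -scalerA.
under eq_bigr => k _ do rewrite -scaler_sumr.
by rewrite sum_kronZ.
Qed.

Lemma mulH_bvec i j : mu (e i) (e j) = hmu H i j.
Proof. by rewrite mulH_bvecl; under eq_bigr => k _ do rewrite bvecE; rewrite sum_kronZ. Qed.

Lemma mulH_bvecr j u : mu u (e j) = \sum_i u 0 i *: hmu H i j.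
Proof.
rewrite /mulH; apply: eq_bigr => i _.
under eq_bigr => l _ do rewrite !bvecE mulrC -scalerA.
by rewrite sum_kronZ.
Qed.

Lemma mulH_expandl u v : mu u v = \sum_i u 0 i *: mu (e i) v.
Proof.
under [RHS]eq_bigr => i _ do rewrite mulH_bvecl scaler_sumr.
rewrite /mulH; apply: eq_bigr => i _; apply: eq_bigr => j _.
by rewrite scalerA.
Qed.

Lemma mulH_expandr u v : mu u v = \sum_j v 0 j *: mu u (e j).
Proof.
under [RHS]eq_bigr => j _ do rewrite mulH_bvecr scaler_sumr.
rewrite /mulH exchange_big; apply: eq_bigr => j _; apply: eq_bigr => i _.
by rewrite scalerA mulrC.
Qed.

Lemma mulH_regmx u v : mu u v = u *m regmx H v.
Proof.
by rewrite mulmx_sum_row mulH_expandl; apply: eq_bigr => i _; rewrite rowK.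
Qed.

Lemma mulH_lregmx u v : mu u v = v *m lregmx u.
Proof.
by rewrite mulmx_sum_row mulH_expandr; apply: eq_bigr => i _; rewrite rowK.
Qed.

Lemma mulHZl a u v : mu (a *: u) v = a *: mu u v.
Proof. by rewrite !mulH_regmx scalemxAl. Qed.

Lemma mulHZr a u v : mu u (a *: v) = a *: mu u v.
Proof. by rewrite !mulH_lregmx scalemxAl. Qed.

Lemma mul0H v : mu 0 v = 0.
Proof. by rewrite mulH_regmx mul0mx. Qed.

Lemma mulH_suml I r (P : pred I) (f : I -> 'rV_n) v :
  mu (\sum_(i <- r | P i) f i) v = \sum_(i <- r | P i) mu (f i) v.
Proof.
by rewrite mulH_regmx mulmx_suml; apply: eq_bigr => i _; rewrite mulH_regmx.
Qed.

Lemma DeltaHE u a b : DeltaH H u a b = \sum_i u 0 i * hdelta H i a b.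
Proof. by rewrite /DeltaH summxE; apply: eq_bigr => i _; rewrite mxE. Qed.

Lemma DeltaH_bvec i : DeltaH H (e i) = hdelta H i.
Proof.
apply/matrixP => a b; rewrite DeltaHE.
by under eq_bigr => k _ do rewrite bvecE; exact: (@sum_kronZ _ F^o).
Qed.

Lemma DeltaHD u v : DeltaH H (u + v) = DeltaH H u + DeltaH H v.
Proof.
by rewrite /DeltaH -big_split; apply: eq_bigr => i _; rewrite mxE scalerDl.
Qed.

Lemma DeltaHZ a u : DeltaH H (a *: u) = a *: DeltaH H u.
Proof.
by rewrite /DeltaH scaler_sumr; apply: eq_bigr => i _; rewrite mxE scalerA.
Qed.

Lemma epsHE u : epsH H u = (u *m epscol H) 0 0.
Proof. by rewrite /epsH mxE; apply: eq_bigr => i _; rewrite mxE. Qed.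

Lemma epsH_bvec i : epsH H (e i) = heps H i.
Proof.
rewrite /epsH; under eq_bigr => k _ do rewrite bvecE.
exact: (@sum_kronZ _ F^o).
Qed.

Lemma regmx_linear : linear (regmx H).
Proof.
move=> a u v; apply/row_matrixP => i; rewrite linearD linearZ /= !rowK.
by rewrite !mulH_lregmx mulmxDl scalemxAl.
Qed.

HB.instance Definition _ :=
  GRing.isLinear.Build F 'rV[F]_n 'M[F]_n *:%R (regmx H) regmx_linear.

End HopfCoordinates.

Section SweedlerSums.
Variables (F : fieldType) (n : nat) (H : hopf_data F n).
Local Notation e := (@bvec F n).

(* [sweedler u G] is the Sweedler sum  sum_(u) G (u_(1)) (u_(2))  with G given
   on pairs of basis vectors; [bilin G] is the bilinear extension of G. *)
Definition sweedler p q (u : 'rV[F]_n) (G : 'I_n -> 'I_n -> 'M[F]_(p, q)) :=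
  \sum_a \sum_b DeltaH H u a b *: G a b.

Definition bilin p q (G : 'I_n -> 'I_n -> 'M[F]_(p, q)) (x w : 'rV[F]_n) :=
  \sum_s \sum_t (x 0 s * w 0 t) *: G s t.

Variables p q : nat.
Implicit Types (G : 'I_n -> 'I_n -> 'M[F]_(p, q)) (u v : 'rV[F]_n).

Lemma eq_sweedler u G1 G2 :
  (forall a b, G1 a b = G2 a b) -> sweedler u G1 = sweedler u G2.
Proof. by move=> E; apply: eq_bigr => a _; apply: eq_bigr => b _; rewrite E. Qed.

Lemma sweedlerE u G i j :
  sweedler u G i j = \sum_a \sum_b DeltaH H u a b * G a b i j.
Proof.
rewrite /sweedler summxE; apply: eq_bigr => a _; rewrite summxE.
by apply: eq_bigr => b _; rewrite mxE.
Qed.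

Lemma sweedler_bvec i G :
  sweedler (e i) G = \sum_a \sum_b hdelta H i a b *: G a b.
Proof. by rewrite /sweedler DeltaH_bvec. Qed.

Lemma sweedler_sumr m u (G : 'I_m -> 'I_n -> 'I_n -> 'M[F]_(p, q)) :
  sweedler u (fun a b => \sum_k G k a b) = \sum_k sweedler u (G k).
Proof.
rewrite /sweedler; symmetry; rewrite exchange_big; apply: eq_bigr => a _.
by rewrite exchange_big; apply: eq_bigr => b _; rewrite scaler_sumr.
Qed.

Lemma sweedlerDr u G1 G2 :
  sweedler u (fun a b => G1 a b + G2 a b) = sweedler u G1 + sweedler u G2.
Proof.
rewrite /sweedler -big_split; apply: eq_bigr => a _; rewrite -big_split.
by apply: eq_bigr => b _; rewrite scalerDr.
Qed.

Lemma sweedlerZr u c G : sweedler u (fun a b => c *: G a b) = c *: sweedler u G.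
Proof.
rewrite /sweedler scaler_sumr; apply: eq_bigr => a _; rewrite scaler_sumr.
by apply: eq_bigr => b _; rewrite !scalerA mulrC.
Qed.

Lemma sweedler_coef u (X : 'I_n -> 'I_n -> 'rV[F]_n) k (A : 'M[F]_(p, q)) :
  sweedler u (fun a b => X a b 0 k *: A) = sweedler u X 0 k *: A.
Proof.
rewrite /sweedler summxE scaler_suml; apply: eq_bigr => a _.
rewrite summxE scaler_suml; apply: eq_bigr => b _.
by rewrite scalerA mxE.
Qed.

Lemma sweedler_mulmxl r u G (A : 'M[F]_(r, p)) :
  A *m sweedler u G = sweedler u (fun a b => A *m G a b).
Proof.
rewrite /sweedler mulmx_sumr; apply: eq_bigr => a _; rewrite mulmx_sumr.
by apply: eq_bigr => b _; rewrite scalemxAr.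
Qed.

Lemma sweedler_mulmxr r u G (A : 'M[F]_(q, r)) :
  sweedler u G *m A = sweedler u (fun a b => G a b *m A).
Proof.
rewrite /sweedler mulmx_suml; apply: eq_bigr => a _; rewrite mulmx_suml.
by apply: eq_bigr => b _; rewrite scalemxAl.
Qed.

Lemma sweedler_lin m (c : 'I_m -> F) (v : 'I_m -> 'rV[F]_n) G :
  sweedler (\sum_l c l *: v l) G = \sum_l c l *: sweedler (v l) G.
Proof.
elim/big_rec2: _ => [|l x y _ IH].
  rewrite /sweedler big1 // => a _; rewrite big1 // => b _.
  by rewrite DeltaHE big1 ?scale0r // => i _; rewrite mxE mul0r.
rewrite -IH /sweedler scaler_sumr -big_split; apply: eq_bigr => a _.
rewrite scaler_sumr -big_split; apply: eq_bigr => b _.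
by rewrite DeltaHD DeltaHZ !mxE scalerDl scalerA.
Qed.

Lemma sweedler_expand u G : sweedler u G = \sum_i u 0 i *: sweedler (e i) G.
Proof. by rewrite {1}(row_sum_delta u) sweedler_lin. Qed.

Lemma sweedler_exch u v (G : 'I_n -> 'I_n -> 'I_n -> 'I_n -> 'M[F]_(p, q)) :
  sweedler u (fun a b => sweedler v (G a b)) =
  sweedler v (fun c d => sweedler u (fun a b => G a b c d)).
Proof.
rewrite /sweedler.
under eq_bigr => a _ do under eq_bigr => b _ do rewrite scaler_sumr.
under eq_bigr => a _ do under eq_bigr => b _ do under eq_bigr => c _ do
  rewrite scaler_sumr.
under [RHS]eq_bigr => c _ do under eq_bigr => d _ do rewrite scaler_sumr.
under [RHS]eq_bigr => c _ do under eq_bigr => d _ do under eq_bigr => a _ do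
  rewrite scaler_sumr.
rewrite exchange_big4; do 4! apply: eq_bigr => ? _.
by rewrite !scalerA mulrC.
Qed.

End SweedlerSums.

Section HopfAxioms.
Variables (F : fieldType) (n : nat) (H : hopf_data F n).
Hypothesis hH : is_hopf H.
Local Notation e := (@bvec F n).
Local Notation mu := (mulH H).
Local Notation dl := (hdelta H).
Local Notation ep := (heps H).

Lemma mulHA u v w : mu (mu u v) w = mu u (mu v w).
Proof. by case: hH. Qed.

Lemma mul1H u : mu (hone H) u = u.
Proof. by case: hH => _ [h _]; case: (h u). Qed.

Lemma mulH1 u : mu u (hone H) = u.
Proof. by case: hH => _ [h _]; case: (h u). Qed.

Lemma hdelta_coassoc i a b c :
  \sum_j dl i j c * dl j a b = \sum_j dl i a j * dl j b c.
Proof. by case: hH => _ [_ [h _]]; apply: h. Qed.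

Lemma hdelta_counitl i b : \sum_a dl i a b * ep a = (i == b)%:R.
Proof. by case: hH => _ [_ [_ [[h _] _]]]; apply: h. Qed.

Lemma hdelta_counitr i a : \sum_b dl i a b * ep b = (i == a)%:R.
Proof. by case: hH => _ [_ [_ [[_ h] _]]]; apply: h. Qed.

Lemma DeltaH_mulH u v x y : DeltaH H (mu u v) x y =
  \sum_a \sum_b \sum_c \sum_d
     DeltaH H u a b * DeltaH H v c d * hmu H a c 0 x * hmu H b d 0 y.
Proof. by case: hH => _ [_ [_ [_ [[h _] _]]]]; apply: h. Qed.

Lemma epsH_mulH u v : epsH H (mu u v) = epsH H u * epsH H v.
Proof. by case: hH => _ [_ [_ [_ [_ [[h _] _]]]]]. Qed.

Lemma epsH1 : epsH H (hone H) = 1.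
Proof. by case: hH => _ [_ [_ [_ [_ [[_ h] _]]]]]. Qed.

Lemma sweedler_antipode u :
  sweedler H u (fun a b => mu (e a) (SH H (e b))) = epsH H u *: hone H.
Proof. by case: hH => _ [_ [_ [_ [_ [_ h]]]]]; case: (h u). Qed.

Lemma regmxM g h : regmx H (mu g h) = regmx H g *m regmx H h.
Proof. by apply/row_matrixP => j; rewrite row_mul !rowK -mulHA mulH_regmx. Qed.

Lemma regmx_epscol h : regmx H h *m epscol H = epsH H h *: epscol H.
Proof.
apply/matrixP => i j; rewrite [j]ord1 !mxE mulrC -epsH_bvec -epsH_mulH /epsH.
by apply: eq_bigr => k _; rewrite !mxE.
Qed.

Variables p q : nat.

Lemma sweedler_coassoc u (G : 'I_n -> 'I_n -> 'I_n -> 'M[F]_(p, q)) :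
  sweedler H u (fun a b => sweedler H (e a) (fun c d => G c d b)) =
  sweedler H u (fun c a => sweedler H (e a) (fun d b => G c d b)).
Proof.
rewrite sweedler_expand [RHS]sweedler_expand; apply: eq_bigr => i _.
congr (_ *: _); rewrite !sweedler_bvec.
under eq_bigr => a _ do under eq_bigr => b _ do
  rewrite sweedler_bvec scaler_sumr.
under eq_bigr => a _ do under eq_bigr => b _ do under eq_bigr => c _ do
  (rewrite scaler_sumr; under eq_bigr => d _ do rewrite scalerA).
under [RHS]eq_bigr => a _ do under eq_bigr => b _ do
  rewrite sweedler_bvec scaler_sumr.
under [RHS]eq_bigr => a _ do under eq_bigr => b _ do under eq_bigr => c _ do
  (rewrite scaler_sumr; under eq_bigr => d _ do rewrite scalerA).
transitivity (\sum_c \sum_d \sum_b \sum_a (dl i a b * dl a c d) *: G c d b).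
  rewrite exchange_big4; apply: eq_bigr => c _; apply: eq_bigr => d _.
  exact: exchange_big.
transitivity (\sum_c \sum_d \sum_b \sum_a (dl i c a * dl a d b) *: G c d b).
  do 3! apply: eq_bigr => ? _.
  by rewrite -!scaler_suml hdelta_coassoc.
apply: eq_bigr => c _; symmetry; rewrite exchange_big; apply: eq_bigr => d _.
exact: exchange_big.
Qed.

Lemma sweedler_counitl u (G : 'I_n -> 'M[F]_(p, q)) :
  sweedler H u (fun a b => ep a *: G b) = \sum_b u 0 b *: G b.
Proof.
rewrite sweedler_expand; apply: eq_bigr => i _; congr (_ *: _).
rewrite sweedler_bvec exchange_big /=.
under eq_bigr => b _ do under eq_bigr => a _ do rewrite scalerA.
by under eq_bigr => b _ do rewrite -scaler_suml hdelta_counitl; rewrite sum_kronZ.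
Qed.

Lemma sweedler_counitr u (G : 'I_n -> 'M[F]_(p, q)) :
  sweedler H u (fun a b => ep b *: G a) = \sum_a u 0 a *: G a.
Proof.
rewrite sweedler_expand; apply: eq_bigr => i _; congr (_ *: _).
rewrite sweedler_bvec.
under eq_bigr => a _ do under eq_bigr => b _ do rewrite scalerA.
by under eq_bigr => a _ do rewrite -scaler_suml hdelta_counitr; rewrite sum_kronZ.
Qed.

Lemma sweedler_mulH u v (G : 'I_n -> 'I_n -> 'M[F]_(p, q)) :
  sweedler H (mu u v) G =
  sweedler H u (fun a b => sweedler H v (fun c d =>
    bilin G (hmu H a c) (hmu H b d))).
Proof.
rewrite /sweedler /bilin.
under eq_bigr => x _ do under eq_bigr => y _ do rewrite DeltaH_mulH scaler_suml.
under eq_bigr => x _ do under eq_bigr => y _ do under eq_bigr => a _ do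
  rewrite scaler_suml.
under eq_bigr => x _ do under eq_bigr => y _ do under eq_bigr => a _ do
  under eq_bigr => b _ do rewrite scaler_suml.
under eq_bigr => x _ do under eq_bigr => y _ do under eq_bigr => a _ do
  under eq_bigr => b _ do under eq_bigr => c _ do rewrite scaler_suml.
rewrite exchange_big6; apply: eq_bigr => a _; apply: eq_bigr => b _.
rewrite scaler_sumr; apply: eq_bigr => c _.
rewrite scaler_sumr; apply: eq_bigr => d _.
rewrite scalerA scaler_sumr; apply: eq_bigr => x _.
rewrite scaler_sumr; apply: eq_bigr => y _.
by rewrite !scalerA !mulrA.
Qed.

End HopfAxioms.

Section Twist.
Variables (F : fieldType) (n : nat) (H : hopf_data F n).
Hypothesis hH : is_hopf H.
Local Notation e := (@bvec F n).
Local Notation mu := (mulH H).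
Local Notation dl := (hdelta H).
Local Notation ep := (heps H).
Local Notation S := (SH H).

Lemma sweedler_mulHl u (G : 'I_n -> 'I_n -> 'rV[F]_n) v :
  mu (sweedler H u G) v = sweedler H u (fun a b => mu (G a b) v).
Proof.
rewrite mulH_regmx sweedler_mulmxr.
by apply: eq_sweedler => a b; rewrite mulH_regmx.
Qed.

Lemma sweedler_mulHr u (G : 'I_n -> 'I_n -> 'rV[F]_n) v :
  mu v (sweedler H u G) = sweedler H u (fun a b => mu v (G a b)).
Proof.
rewrite mulH_lregmx sweedler_mulmxr.
by apply: eq_sweedler => a b; rewrite mulH_lregmx.
Qed.

(* A matrix [Z] stands for the linear map [y |-> y *m Z] of H, and [twistmx Z]
   for [y |-> sum_k sum_(e_k y) <(e_k y)_(1) Z, e_k^*> (e_k y)_(2)].  The twist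
   turns the action of H on the target into the coinduced action on the source
   (lregmx_twistmx); it is injective because the antipode recovers
   [pretwist Z] from [twistmx Z], and [Z] can be read off [pretwist Z]. *)
Definition twistmx (Z : 'M[F]_n) : 'M[F]_n :=
  \matrix_(i < n) \sum_k sweedler H (mu (e k) (e i)) (fun a b => Z a k *: e b).

Definition pretwist (Z : 'M[F]_n) (y : 'rV[F]_n) : 'rV[F]_n :=
  \sum_k sweedler H (e k) (fun a b => (mu (e a) y *m Z) 0 k *: e b).

Lemma twistmx_linear : linear twistmx.
Proof.
move=> a Z1 Z2; apply/row_matrixP => i; rewrite linearD linearZ /= !rowK.
rewrite scaler_sumr -big_split; apply: eq_bigr => k _ /=.
rewrite -sweedlerZr -sweedlerDr; apply: eq_sweedler => c b.
by rewrite !mxE scalerDl scalerA.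
Qed.

HB.instance Definition _ :=
  GRing.isLinear.Build F 'M[F]_n 'M[F]_n *:%R twistmx twistmx_linear.

Lemma sweedler_twistmx_antipode Z y :
  sweedler H y (fun c d => mu (row c (twistmx Z)) (S (e d))) = pretwist Z y.
Proof.
under eq_sweedler => c d do rewrite rowK mulH_suml.
under eq_sweedler => c d do under eq_bigr => k _ do
  rewrite sweedler_mulHl sweedler_mulH //.
rewrite sweedler_sumr; apply: eq_bigr => k _.
rewrite sweedler_exch; apply: eq_sweedler => a b.
transitivity (sweedler H y (fun p q => sweedler H (e p) (fun c d =>
   (hmu H a c *m Z) 0 k *: mu (hmu H b d) (S (e q))))).
  apply: eq_sweedler => p q; apply: eq_sweedler => c d.
  rewrite /bilin.
  under eq_bigr => s _ do under eq_bigr => t _ do rewrite mulHZl scalerA.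
  rewrite mxE scaler_suml (mulH_expandl H (hmu H b d)).
  apply: eq_bigr => s _; rewrite scaler_sumr; apply: eq_bigr => t _.
  rewrite !scalerA; congr (_ *: _).
  by rewrite -!mulrA [Z s k * _]mulrC.
rewrite sweedler_coassoc //.
transitivity (sweedler H y (fun c p => ep p *: ((hmu H a c *m Z) 0 k *: e b))).
  apply: eq_sweedler => c p.
  rewrite sweedlerZr [in RHS]scalerA [in RHS]mulrC -[in RHS]scalerA.
  congr (_ *: _).
  under eq_sweedler => d q do rewrite -mulH_bvec mulHA //.
  by rewrite -sweedler_mulHr sweedler_antipode // mulHZr mulH1 // epsH_bvec.
rewrite sweedler_counitr // mulH_bvecl mulmx_suml summxE scaler_suml.
by apply: eq_bigr => c _; rewrite scalerA -scalemxAl [in RHS]mxE.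
Qed.

Lemma pretwistE Z y j :
  pretwist Z y 0 j = \sum_k \sum_a dl k a j * (mu (e a) y *m Z) 0 k.
Proof.
rewrite summxE; apply: eq_bigr => k _; rewrite sweedlerE DeltaH_bvec.
apply: eq_bigr => a _.
under eq_bigr => b _ do rewrite mxE bvecE mulrA mulrC.
exact: (@sum_kronZr _ F^o).
Qed.

Lemma pretwistK Z y :
  \sum_j sweedler H (e j) (fun c b => pretwist Z (mu (S (e c)) y) 0 j *: e b) =
  y *m Z.
Proof.
pose X a c k := (mu (e a) (mu (S (e c)) y) *m Z) 0 k.
transitivity (\sum_j \sum_k \sum_a
                dl k a j *: sweedler H (e j) (fun c b => X a c k *: e b)).
  apply: eq_bigr => j _.
  transitivity (sweedler H (e j) (fun c b =>
                  \sum_k \sum_a dl k a j *: (X a c k *: e b))).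
    apply: eq_sweedler => c b.
    rewrite pretwistE scaler_suml; apply: eq_bigr => k _; rewrite scaler_suml.
    by apply: eq_bigr => a _; rewrite scalerA.
  rewrite sweedler_sumr; apply: eq_bigr => k _.
  by rewrite sweedler_sumr; apply: eq_bigr => a _; rewrite sweedlerZr.
transitivity (\sum_k sweedler H (e k) (fun a j =>
                sweedler H (e j) (fun c b => X a c k *: e b))).
  by rewrite exchange_big; apply: eq_bigr => k _; rewrite sweedler_bvec exchange_big.
transitivity (\sum_k sweedler H (e k) (fun j b => ep j *: ((y *m Z) 0 k *: e b))).
  apply: eq_bigr => k _.
  rewrite -(sweedler_coassoc hH (e k) (fun a c b => X a c k *: e b)).
  apply: eq_sweedler => j b; rewrite /X sweedler_coef.
  under eq_sweedler => a c do rewrite -mulHA //.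
  rewrite -sweedler_mulmxr -sweedler_mulHl sweedler_antipode // mulHZl mul1H //.
  by rewrite epsH_bvec -scalemxAl mxE scalerA.
under eq_bigr => k _ do rewrite sweedler_counitl //.
rewrite [RHS]row_sum_delta; apply: eq_bigr => k _.
by under eq_bigr => b _ do rewrite bvecE; rewrite sum_kronZ.
Qed.

Lemma twistmx_inj : injective twistmx.
Proof.
apply: raddf_inj => Z XZ.
have pretwist0 y : pretwist Z y = 0.
  rewrite -sweedler_twistmx_antipode /sweedler big1 // => c _.
  by rewrite big1 // => d _; rewrite XZ row0 mul0H scaler0.
apply/row_matrixP => i; rewrite row0 rowE -/(e i) -pretwistK.
apply: big1 => j _; rewrite /sweedler big1 // => c _.
by rewrite big1 // => b _; rewrite pretwist0 mxE scale0r scaler0.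
Qed.

Lemma lregmx_twistmx g Z : lregmx H g *m twistmx Z = twistmx (Z *m regmx H g).
Proof.
apply/row_matrixP => i; rewrite row_mul !rowK mulmx_sum_row.
transitivity (\sum_k sweedler H (mu (e k) (mu g (e i))) (fun a b => Z a k *: e b)).
  under eq_bigr => l _ do rewrite rowK scaler_sumr.
  rewrite exchange_big; apply: eq_bigr => k _; rewrite -sweedler_lin.
  by rewrite [in RHS]mulH_expandr.
transitivity (\sum_m \sum_k mu (e m) g 0 k *:
                sweedler H (mu (e k) (e i)) (fun a b => Z a m *: e b)).
  apply: eq_bigr => m _; rewrite -mulHA // -sweedler_lin.
  by rewrite [in LHS]mulH_expandl.
rewrite exchange_big; apply: eq_bigr => k _.
under eq_bigr => m _ do rewrite -sweedlerZr.
rewrite -sweedler_sumr; apply: eq_sweedler => a b.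
rewrite [in RHS]mxE scaler_suml; apply: eq_bigr => m _.
by rewrite scalerA mulrC /regmx mxE.
Qed.

Lemma twistmx_unit : twistmx (epscol H *m hone H) = 1%:M.
Proof.
apply/row_matrixP => i; rewrite rowK row1.
transitivity (sweedler H (mu (hone H) (e i)) (fun a b => ep a *: e b)).
  rewrite [in RHS](mulH_expandl H (hone H)) sweedler_lin; apply: eq_bigr => k _.
  rewrite -sweedlerZr; apply: eq_sweedler => a b.
  by rewrite !mxE big_ord1 !mxE scalerA mulrC.
by rewrite mul1H // sweedler_counitl // -row_sum_delta.
Qed.

Definition untwistmx := lininv twistmx.

(* A retraction of H_H out of the coinduced module, i.e. of 'M[F]_n with
   [g] acting by [lregmx g *m _]. *)
Definition coind_proj (Phi : 'M[F]_n) : 'rV[F]_n := hone H *m untwistmx Phi.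

Lemma coind_proj_linear : linear coind_proj.
Proof.
move=> a P1 P2; rewrite /coind_proj /untwistmx (lininv_linear twistmx_inj).
by rewrite mulmxDr scalemxAr.
Qed.

HB.instance Definition _ :=
  GRing.isLinear.Build F 'M[F]_n 'rV[F]_n *:%R coind_proj coind_proj_linear.

Lemma coind_proj_lregmx g Phi :
  coind_proj (lregmx H g *m Phi) = coind_proj Phi *m regmx H g.
Proof.
have Kt := lininvK twistmx_inj; have tK := lin_lininvK twistmx_inj.
by rewrite /coind_proj /untwistmx -{1}[Phi]Kt lregmx_twistmx tK mulmxA.
Qed.

Lemma coind_proj1 : coind_proj 1%:M = hone H.
Proof.
rewrite /coind_proj /untwistmx -twistmx_unit (lin_lininvK twistmx_inj) mulmxA.
by rewrite [hone H *m _]mx11_scalar -epsHE epsH1 // mul1mx.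
Qed.

End Twist.

Section Modules.
Variables (F : fieldType) (n : nat) (H : hopf_data F n).
Local Notation e := (@bvec F n).
Local Notation mu := (mulH H).

Definition is_module (M : hmod F n) :=
  forall g h, act M (mu g h) = act M g *m act M h.

Definition actmx (M : hmod F n) : 'M[F]_(n, mdim M * mdim M) :=
  \matrix_(j < n) mxvec (act M (e j)).

Variable M : hmod F n.

Lemma act_bvec i : act M (e i) = mrho M i.
Proof. by rewrite /act; under eq_bigr => k _ do rewrite bvecE; rewrite sum_kronZ. Qed.

Lemma act_expand u : act M u = \sum_i u 0 i *: act M (e i).
Proof. by under [RHS]eq_bigr => i _ do rewrite act_bvec. Qed.

Lemma act_linear : linear (act M).
Proof.
move=> a u v; rewrite /act scaler_sumr -big_split; apply: eq_bigr => i _.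
by rewrite !mxE scalerDl scalerA.
Qed.

HB.instance Definition _ :=
  GRing.isLinear.Build F 'rV[F]_n 'M[F]_(mdim M) *:%R (act M) act_linear.

Lemma actmx_mul y : y *m actmx M = mxvec (act M y).
Proof.
rewrite mulmx_sum_row [in RHS]act_expand linear_sum; apply: eq_bigr => j _.
by rewrite rowK linearZ.
Qed.

Lemma faithfulP : reflect (faithful M) (row_free (actmx M)).
Proof.
rewrite -kermx_eq0; apply: (iffP eqP) => [ker0 h /eqP Mh | fM].
  apply/eqP; rewrite -submx0 -ker0; apply/sub_kermxP.
  by rewrite actmx_mul Mh linear0.
apply/row_matrixP => r; rewrite row0.
have : row r (kermx (actmx M)) *m actmx M = 0 by rewrite -row_mul mulmx_ker row0.
rewrite actmx_mul -(linear0 (@mxvec F _ _)) => /(can_inj mxvecK) Mr.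
by apply: fM; rewrite /in_ann Mr.
Qed.

Lemma faithful_ann h : faithful M -> in_ann M h = (h == 0).
Proof.
move=> fM; apply/idP/idP => [/fM ->|/eqP ->] //.
by rewrite /in_ann linear0.
Qed.

Hypothesis hH : is_hopf H.

Lemma trace1_faithful : in_trace H M (hone H) -> faithful M.
Proof.
move=> [k [fs [ms [hom E]]]] h /eqP Mh.
rewrite -(mul1H hH h) mulH_regmx E mulmx_suml big1 // => i _.
by rewrite -mulmxA -hom Mh mul0mx mulmx0.
Qed.

Lemma trace1_all : in_trace H M (hone H) -> forall h, in_trace H M h.
Proof.
move=> [k [fs [ms [hom E]]]] h.
exists k, fs, (fun i => ms i *m act M h); split => //.
rewrite -[in LHS](mul1H hH h) mulH_regmx E mulmx_suml; apply: eq_bigr => i _.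
by rewrite -!mulmxA hom.
Qed.

End Modules.

Section Generator.
Variables (F : fieldType) (n : nat) (H : hopf_data F n) (M : hmod F n).
Hypotheses (hH : is_hopf H) (modM : is_module H M) (fM : faithful M).
Local Notation e := (@bvec F n).
Local Notation d := (mdim M).

(* Faithfulness makes [pinvmx (actmx M)] a left inverse of [y |-> act M y];
   [lift_block i] is its block of rows met by row [i] of [act M y]. *)
Definition lift_block (i : 'I_d) : 'M[F]_(d, n) :=
  \matrix_(j < d) row (mxvec_index i j) (pinvmx (actmx M)).

Lemma sum_lift_block y : \sum_i row i (act M y) *m lift_block i = y.
Proof.
rewrite -[RHS]mulmx1 -(mulmxVp (introT (faithfulP M) fM)) mulmxA actmx_mul.
move: (act M y) => A; rewrite {2}(matrix_sum_delta A) linear_sum mulmx_suml.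
apply: eq_bigr => i _; rewrite linear_sum mulmx_suml mulmx_sum_row.
apply: eq_bigr => j _; rewrite linearZ /= mxvec_delta -scalemxAl -rowE.
by rewrite rowK mxE.
Qed.

Definition coind_map (i : 'I_d) (m : 'rV[F]_d) : 'M[F]_n :=
  \matrix_(y < n) (m *m act M (e y) *m lift_block i).

Lemma coind_map_linear i : linear (coind_map i).
Proof.
move=> a m1 m2; apply/row_matrixP => y; rewrite linearD linearZ /= !rowK.
by rewrite !mulmxDl -!scalemxAl.
Qed.

HB.instance Definition _ i :=
  GRing.isLinear.Build F 'rV[F]_d 'M[F]_n *:%R (coind_map i) (coind_map_linear i).

Lemma lregmx_coind_map i g m :
  lregmx H g *m coind_map i m = coind_map i (m *m act M g).
Proof.
apply/row_matrixP => y; rewrite row_mul !rowK mulmx_sum_row.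
rewrite -(mulmxA m) -modM act_expand !mulmx_sumr mulmx_suml.
by apply: eq_bigr => z _; rewrite rowK -scalemxAr -scalemxAl.
Qed.

Lemma sum_coind_map : \sum_i coind_map i (delta_mx 0 i) = 1%:M.
Proof.
apply/row_matrixP => y; rewrite row1 linear_sum /= -[RHS](sum_lift_block (e y)).
by apply: eq_bigr => i _; rewrite rowK -rowE.
Qed.

Definition trace_map (i : 'I_d) : 'M[F]_(d, n) :=
  lin1_mx (coind_proj H \o coind_map i).

Lemma trace_map_hom i : is_hom H (trace_map i).
Proof.
move=> h; apply/row_matrixP => j.
rewrite !row_mul [row j (trace_map i)]rowE !mul_rV_lin1 /=.
by rewrite -coind_proj_lregmx // lregmx_coind_map -rowE.
Qed.

Lemma faithful_generator h : in_trace H M h.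
Proof.
apply: trace1_all => //; exists d, trace_map, (fun i => delta_mx 0 i).
split; first exact: trace_map_hom.
under eq_bigr => i _ do rewrite mul_rV_lin1 /=.
by rewrite -linear_sum /= sum_coind_map coind_proj1.
Qed.

End Generator.

Section FactorModule.
Variables (F : fieldType) (n : nat) (H : hopf_data F n) (I : 'M[F]_n).
Hypothesis hH : is_hopf H.
Local Notation Hf := (factmod H I).

Lemma in_factE m (W : 'M_(m, n)) : in_fact I W = in_factmod I W.
Proof. by []. Qed.

Lemma val_factE m (W : 'M_(m, _)) : val_fact (I := I) W = val_factmod W.
Proof. by []. Qed.

Lemma act_factmod h :
  act Hf h = val_factmod 1%:M *m regmx H h *m in_factmod I 1%:M.
Proof.
have -> : regmx H h = \sum_i h 0 i *: regmx H (@bvec F n i).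
  by rewrite {1}[h]row_sum_delta linear_sum; apply: eq_bigr => i _; rewrite linearZ.
rewrite mulmx_sumr mulmx_suml; apply: eq_bigr => i _.
by rewrite /= in_factE val_factE in_factmodE scalemxAl scalemxAr.
Qed.

Lemma in_val_factmod_sub m (W : 'M_(m, n)) :
  (W - val_factmod (in_factmod I W) <= I)%MS.
Proof. by rewrite -{1}(add_sub_fact_mod I W) addrK val_submodP. Qed.

Lemma factmod_module : (forall h, (I *m regmx H h <= I)%MS) -> is_module H Hf.
Proof.
move=> Iid g h; rewrite !act_factmod regmxM //.
set V := val_factmod _; set C := in_factmod I 1%:M.
set A := V *m regmx H g *m C.
rewrite (mulmxA V) (mulmxA A _ C) (mulmxA A V).
have -> : A *m V = val_factmod (in_factmod I (V *m regmx H g)).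
  by rewrite val_factmodE in_factmodE.
apply/eqP; rewrite -subr_eq0 -!mulmxBl -in_factmodE in_factmod_eq0.
exact: submx_trans (submxMr _ (in_val_factmod_sub _)) (Iid h).
Qed.

Hypothesis I_eps : I *m epscol H = 0.

Definition factmod_eps : 'cV[F]_(mdim Hf) := val_factmod 1%:M *m epscol H.

Lemma val_in_factmod_eps m (W : 'M_(m, n)) :
  val_factmod (in_factmod I W) *m epscol H = W *m epscol H.
Proof.
apply/eqP; rewrite eq_sym -subr_eq0 -mulmxBl; apply/eqP/sub_kermxP.
by apply: submx_trans (in_val_factmod_sub W) _; apply/sub_kermxP.
Qed.

Lemma act_factmod_eps h : act Hf h *m factmod_eps = epsH H h *: factmod_eps.
Proof.
rewrite act_factmod /factmod_eps mulmxA -in_factmodE -val_factmodE.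
by rewrite val_in_factmod_eps -mulmxA regmx_epscol // -scalemxAr.
Qed.

Lemma in_factmod1_eps : in_factmod I (hone H) *m factmod_eps = 1%:M.
Proof.
rewrite /factmod_eps mulmxA -val_factmodE val_in_factmod_eps.
by rewrite [LHS]mx11_scalar -epsHE epsH1.
Qed.

End FactorModule.

Section AugmentationIdeal.
Variables (F : fieldType) (n : nat) (H : hopf_data F n) (R : 'M[F]_n).
Hypothesis hH : is_hopf H.

Lemma RplusH_eps : RplusH H R *m epscol H = 0.
Proof.
apply/sub_kermxP/sumsmx_subP => j _; apply/sub_kermxP.
rewrite -mulmxA regmx_epscol // -scalemxAr.
by have /sub_kermxP -> := capmxSr R (kermx (epscol H)); rewrite scaler0.
Qed.

Lemma RplusH_ideal h : (RplusH H R *m regmx H h <= RplusH H R)%MS.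
Proof.
rewrite sumsmxMr; apply/sumsmx_subP => j _.
rewrite -mulmxA -regmxM // [mulH _ _ _]row_sum_delta linear_sum mulmx_sumr.
apply: summx_sub => l _; rewrite linearZ -scalemxAr; apply: scalemx_sub.
exact: (sumsmx_sup l).
Qed.

End AugmentationIdeal.

Section TensorModules.
Variables (F : fieldType) (n : nat) (H : hopf_data F n).
Local Notation e := (@bvec F n).

Lemma act_tensmod (M N : hmod F n) h :
  act (tensmod H M N) h = sweedler H h (fun a b => act M (e a) *t act N (e b)).
Proof.
rewrite act_expand sweedler_expand; apply: eq_bigr => i _; congr (_ *: _).
rewrite act_bvec sweedler_bvec; apply: eq_bigr => a _; apply: eq_bigr => b _.
by rewrite !act_bvec.
Qed.

Lemma bilin_tensmx (M N : hmod F n) x w :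
  bilin (fun s t => act M (e s) *t act N (e t)) x w = act M x *t act N w.
Proof.
rewrite (act_expand M x) (act_expand N w) tensmx_suml; apply: eq_bigr => s _.
rewrite tensmxZl tensmx_sumr scaler_sumr; apply: eq_bigr => t _.
by rewrite tensmxZr scalerA.
Qed.

Hypothesis hH : is_hopf H.

Lemma tensmod_module (M N : hmod F n) :
  is_module H M -> is_module H N -> is_module H (tensmod H M N).
Proof.
move=> modM modN g h; rewrite !act_tensmod sweedler_mulH // sweedler_mulmxr.
apply: eq_sweedler => a b; rewrite sweedler_mulmxl; apply: eq_sweedler => c d.
by rewrite bilin_tensmx tensmx_mul -modM -modN !mulH_bvec.
Qed.

(* [phi] is a module map from [N] onto the trivial module with [phi q0 = 1],
   so [id (x) phi] sends [(m (x) q0) h] to [m h]. *)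
Lemma tensmod_faithful (M N : hmod F n) (q0 : 'rV[F]_(mdim N)) (phi : 'cV[F]_(mdim N)) :
  (forall h, act N h *m phi = epsH H h *: phi) -> q0 *m phi = 1%:M ->
  faithful M -> faithful (tensmod H M N).
Proof.
move=> phiE q0phi fM h /eqP MNh; apply: fM; apply/eqP.
suff Mh_row (x : 'rV[F]_(mdim M)) : x *m act M h = 0.
  by apply/row_matrixP => i; rewrite row0 rowE Mh_row.
have : (x *t q0) *m act (tensmod H M N) h *m (1%:M *t phi) = 0.
  by rewrite MNh mulmx0 mul0mx.
rewrite act_tensmod sweedler_mulmxl sweedler_mulmxr.
under eq_sweedler => a b do
  rewrite !tensmx_mul mulmx1 -mulmxA phiE epsH_bvec -scalemxAr q0phi tensmxZr.
rewrite sweedler_counitr //.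
under eq_bigr => a _ do rewrite -tensmxZl scalemxAr.
rewrite -tensmx_suml -mulmx_sumr -act_expand tens_mx_scalar scale1r.
by move/(congr1 (castmx (muln1 _, muln1 _))); rewrite castmxKV castmx_const.
Qed.

End TensorModules.

Lemma least_posP (P : pred nat) :
  (exists2 m, 0 < m & P m)%N -> exists l, least_pos (fun m => P m) l.
Proof.
case=> m m0 Pm; have exP : exists m, (0 < m)%N && P m by exists m; rewrite m0.
case: (ex_minnP exP) => l /andP[l0 Pl] lmin; exists l; split => // l' l'0 Pl'.
by apply: lmin; rewrite l'0.
Qed.

Lemma eq_least_pos (P1 P2 : nat -> Prop) l :
  (forall m, P1 m <-> P2 m) -> least_pos P1 l -> least_pos P2 l.
Proof.
move=> P12 [l0 P1l min1]; split=> [//||l' l'0 /P12]; first exact/P12.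
exact: min1.
Qed.

Section StableIndex.
Variables (T : Type) (P : nat -> Prop) (A : nat -> T -> Prop) (Ainf : T -> Prop).
Hypotheses (P_S : forall m, (0 < m)%N -> P m -> P m.+1)
  (PE : forall m, (0 < m)%N -> P m <-> forall x, A m x <-> Ainf x).

Lemma least_pos_stable l :
  least_pos P l -> least_pos (fun l => forall m, (l <= m)%N -> forall x, A l x <-> A m x) l.
Proof.
case=> l0 Pl lmin.
have P_up m : (l <= m)%N -> P m.
  elim: m => [|m IHm]; first by rewrite leqn0 => /eqP l_0; rewrite l_0 in l0.
  rewrite leq_eqVlt => /orP[/eqP <- //|]; rewrite ltnS => lm.
  exact: P_S (leq_trans l0 lm) (IHm lm).
split=> // [m lm x|l' l'0 stable_l'].
  by have := (PE l0).1 Pl x; have := (PE (leq_trans l0 lm)).1 (P_up m lm) x; tauto.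
apply: lmin => //; apply/(PE l'0) => x.
have lm : (l <= maxn l l')%N by rewrite leq_maxl.
have := stable_l' _ (leq_maxr l l') x.
by have := (PE (leq_trans l0 lm)).1 (P_up _ lm) x; tauto.
Qed.

End StableIndex.

Section TensorPowers.
Variables (F : fieldType) (n : nat) (H : hopf_data F n) (M : hmod F n).
Hypotheses (hH : is_hopf H) (modM : is_module H M).
Variables (q0 : 'rV[F]_(mdim M)) (phi : 'cV[F]_(mdim M)).
Hypotheses (phiE : forall h, act M h *m phi = epsH H h *: phi) (q0phi : q0 *m phi = 1%:M).

Lemma tpowS m : (0 < m)%N -> tpow H M m.+1 = tensmod H (tpow H M m) M.
Proof. by case: m. Qed.

Lemma tpow_module m : (0 < m)%N -> is_module H (tpow H M m).
Proof.
elim: m => [//|m IHm _]; case: m IHm => [_|m IHm]; first exact: modM.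
by rewrite tpowS //; apply: tensmod_module => //; apply: IHm.
Qed.

Lemma tpow_faithfulS m : (0 < m)%N -> faithful (tpow H M m) -> faithful (tpow H M m.+1).
Proof. by move=> m0; rewrite tpowS //; apply: tensmod_faithful phiE q0phi. Qed.

Lemma least_faithful_is_L l :
  least_pos (fun m => faithful (tpow H M m)) l -> is_L H M l.
Proof.
apply: (least_pos_stable (Ainf := fun _ => True)) => [|m m0]; first exact: tpow_faithfulS.
split=> [fM h | trace_all]; first by split=> // _; apply: faithful_generator => //; exact: tpow_module.
exact/trace1_faithful/(trace_all _).2.
Qed.

Lemma least_faithful_is_ell l :
  least_pos (fun m => faithful (tpow H M m)) l -> is_ell H M l.
Proof.
move=> lmin; apply: (eq_least_pos (P1 := fun l => forall m, (l <= m)%N ->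
  forall h, in_ann (tpow H M l) h <-> in_ann (tpow H M m) h)).
  move=> l'; split=> stable m lm h; first by apply/idP/idP => /(stable m lm h).
  by rewrite (stable m lm h).
apply: (least_pos_stable (Ainf := fun h => h = 0)) lmin => [m m0|m m0].
  exact: tpow_faithfulS.
split=> [fM h | annE h /(annE h) //].
by rewrite faithful_ann //; split=> [/eqP|->].
Qed.

End TensorPowers.

Lemma cond_faithful_least (F : fieldType) (n : nat) (H : hopf_data F n) (M : hmod F n) :
  cond_faithful H M -> exists l, least_pos (fun m => faithful (tpow H M m)) l.
Proof.
case=> m [m0 fMm].
have [|l lmin] := @least_posP (fun m => row_free (actmx (tpow H M m))).
  by exists m => //; apply/faithfulP.
by exists l; apply: eq_least_pos lmin => k; split=> /faithfulP.
Qed.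

Theorem mainTheorem18 (F : fieldType) (n : nat) (H : hopf_data F n) (R : 'M[F]_n) :
  is_hopf H -> is_hopf_subalg H R ->
  cond_faithful H (Qmod H R) ->
  exists l, is_L H (Qmod H R) l /\ is_ell H (Qmod H R) l.
Proof.
move=> hH _ /cond_faithful_least[l lmin].
have modQ : is_module H (Qmod H R) := factmod_module hH (RplusH_ideal R hH).
have epsQ := act_factmod_eps hH (RplusH_eps R hH).
have oneQ := in_factmod1_eps hH (RplusH_eps R hH).
exists l; split; first exact: least_faithful_is_L hH modQ _ _ epsQ oneQ _ lmin.
exact: least_faithful_is_ell hH _ _ epsQ oneQ _ lmin.
Qed.
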